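(* Let $A\in\mathbb{R}^{n\times n}$, $B\in\mathbb{R}^{n\times k}$, $C\in\mathbb{R}^{m\times n}$, and let $\mathcal{V}^*(C)$ be the maximal $(A,B)$-invariant subspace contained in $\operatorname{Ker}C$. Suppose one of the following holds: (1) $n-m\ge k$, $\operatorname{Im}B\subseteq\operatorname{Ker}C$, and $CAv\neq0$ for every nonzero $v\in\operatorname{Ker}C$; (2) $n-m<k$, $\operatorname{Ker}C\subseteq\operatorname{Im}B$, and there is a matrix $Z$ with $ZB=0$ such that $ZAv\neq0$ for every nonzero $v\in\operatorname{Ker}C$. Then $\dim\mathcal{V}^*(C)=0$, and, in the asynchronous dynamic game described in the context, if the attacker's choice in an odd epoch $l$ is $C_l=C$, the game is in lock mode from epoch $l$ on (there is $\gamma$ with $\Phi_i=\gamma$ for all $i\ge l$).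
   Context: A subspace $\mathcal{V}$ is $(A,B)$-invariant if $(A+BF)\mathcal{V}\subseteq\mathcal{V}$ for some $F\in\mathbb{R}^{k\times n}$ (a friend of $\mathcal{V}$). For $C\in\mathbb{R}^{m\times n}$, $F\in\mathbb{R}^{k\times n}$ let $\Omega(C,F)=[C;\,C(A+BF);\,\dots;\,C(A+BF)^{n-1}]$. Best responses: $BR1_a(F)=\arg\min_{C}\dim\operatorname{Ker}\Omega(C,F)$; $BR1_d(C)=\arg\max_{F}\dim\operatorname{Ker}\Omega(C,F)$; $BR2_a(F)=\arg\min_{C\in BR1_a(F)}\dim\mathcal{V}^*(C)$; $BR2_d(C)=\arg\max_{F\in BR1_d(C)}\min_{C'}\dim\operatorname{Ker}\Omega(C',F)$. The game: an initial $F_0$ is given; in each odd epoch $i$ the attacker chooses $C_i\in BR2_a(F_{i-1})$ (keeping $C_i=C_{i-2}$ whenever $C_{i-2}\in BR2_a(F_{i-1})$), $F_i=F_{i-1}$, and $\Phi_i=\min_{C}\dim\operatorname{Ker}\Omega(C,F_{i-1})$; in each even epoch $i$ the defender chooses $F_i\in BR2_d(C_{i-1})$ (keeping $F_i=F_{i-2}$ whenever $F_{i-2}\in BR2_d(C_{i-1})$), $C_i=C_{i-1}$, and $\Phi_i=\max_{F}\dim\operatorname{Ker}\Omega(C_{i-1},F)$. *)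

From HB Require Import structures.
From mathcomp Require Import all_boot all_order all_algebra.
Set Implicit Arguments. Unset Strict Implicit. Unset Printing Implicit Defensive.
Import Order.TTheory GRing.Theory Num.Theory.
Local Open Scope ring_scope.

(* Conventions: vectors of R^n are column vectors 'cV_n.  A subspace of R^n
   is represented by a square matrix V : 'M_n whose ROW space is the set of
   transposes v^T of its vectors (mxalgebra convention); its dimension is
   \rank V.  Ker C = {v | C v = 0} is represented by kermx C^T. *)

Section Defs.
Variable R : realFieldType.
Variables n m k : nat.
Variables (A : 'M[R]_n) (B : 'M[R]_(n, k)).

Definition Omega (C : 'M[R]_(m, n)) (F : 'M[R]_(k, n)) :
  'M[R]_(\sum_(i < n) m, n) :=
  @mxcol R n (fun _ => m) n (fun i => C *m (A + B *m F) ^+ i).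

Definition dimKerOmega (C : 'M[R]_(m, n)) (F : 'M[R]_(k, n)) : nat :=
  \rank (kermx (Omega C F)^T).

Definition KerS (C : 'M[R]_(m, n)) : 'M[R]_n := kermx C^T.

Definition ABinvariant (V : 'M[R]_n) : Prop :=
  exists F : 'M[R]_(k, n), (V *m (A + B *m F)^T <= V)%MS.

Definition is_Vstar (C : 'M[R]_(m, n)) (V : 'M[R]_n) : Prop :=
  [/\ ABinvariant V, (V <= KerS C)%MS &
      forall W : 'M[R]_n, ABinvariant W -> (W <= KerS C)%MS -> (W <= V)%MS].

Definition dim_Vstar (C : 'M[R]_(m, n)) (d : nat) : Prop :=
  exists V : 'M[R]_n, is_Vstar C V /\ \rank V = d.

Definition is_minKer (F : 'M[R]_(k, n)) (d : nat) : Prop :=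
  (exists C : 'M[R]_(m, n), dimKerOmega C F = d) /\
  forall C : 'M[R]_(m, n), (d <= dimKerOmega C F)%N.

Definition is_maxKer (C : 'M[R]_(m, n)) (d : nat) : Prop :=
  (exists F : 'M[R]_(k, n), dimKerOmega C F = d) /\
  forall F : 'M[R]_(k, n), (dimKerOmega C F <= d)%N.

Definition BR1_a (F : 'M[R]_(k, n)) (C : 'M[R]_(m, n)) : Prop :=
  forall C' : 'M[R]_(m, n), (dimKerOmega C F <= dimKerOmega C' F)%N.

Definition BR1_d (C : 'M[R]_(m, n)) (F : 'M[R]_(k, n)) : Prop :=
  forall F' : 'M[R]_(k, n), (dimKerOmega C F' <= dimKerOmega C F)%N.

Definition BR2_a (F : 'M[R]_(k, n)) (C : 'M[R]_(m, n)) : Prop :=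
  BR1_a F C /\
  exists d, dim_Vstar C d /\
    forall (C' : 'M[R]_(m, n)) d', BR1_a F C' -> dim_Vstar C' d' -> (d <= d')%N.

Definition BR2_d (C : 'M[R]_(m, n)) (F : 'M[R]_(k, n)) : Prop :=
  BR1_d C F /\
  exists d, is_minKer F d /\
    forall (F' : 'M[R]_(k, n)) d', BR1_d C F' -> is_minKer F' d' -> (d' <= d)%N.

(* The asynchronous dynamic game started from F0; epochs i >= 1.
   Cs i, Fs i, Phi i are the attacker's matrix, the defender's gain and the
   value at epoch i (Cs 0 is irrelevant). *)
Definition game (F0 : 'M[R]_(k, n)) (Cs : nat -> 'M[R]_(m, n))
    (Fs : nat -> 'M[R]_(k, n)) (Phi : nat -> nat) : Prop :=
  Fs 0%N = F0 /\
  forall i : nat, (0 < i)%N ->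
    (odd i ->
       [/\ BR2_a (Fs i.-1) (Cs i),
           ((2 < i)%N -> BR2_a (Fs i.-1) (Cs (i - 2)%N) -> Cs i = Cs (i - 2)%N),
           Fs i = Fs i.-1 &
           is_minKer (Fs i.-1) (Phi i)]) /\
    (~~ odd i ->
       [/\ BR2_d (Cs i.-1) (Fs i),
           (BR2_d (Cs i.-1) (Fs (i - 2)%N) -> Fs i = Fs (i - 2)%N),
           Cs i = Cs i.-1 &
           is_maxKer (Cs i.-1) (Phi i)]).

End Defs.

(* Under either hypothesis, for every feedback F the closed-loop matrix
   M = A + B F makes (C, M) observable in two steps: no nonzero v has
   C v = 0 and C M v = 0.  Hence every (A,B)-invariant subspace inside Ker C
   is zero, so dim V*(C) = 0, and Ker Omega(C, F) = 0 for every F.  The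
   attacker's C is therefore a best response to every F; by the keeping rule
   it is replayed in every later epoch, and all later values are 0. *)

From HB Require Import structures.
From mathcomp Require Import all_boot all_order all_algebra.
From mathcomp Require Import zify.
Import Order.TTheory GRing.Theory Num.Theory.
Local Open Scope ring_scope.
Set Implicit Arguments. Unset Strict Implicit. Unset Printing Implicit Defensive.

Lemma mx_le1_scalar (R : nzRingType) (n : nat) (M : 'M[R]_n) :
  (n <= 1)%N -> exists c, M = c%:M.
Proof.
case: n M => [|[|//]] M _; first by exists 0; apply/matrixP => -[].
by exists (M 0 0); apply: mx11_scalar.
Qed.

Section TwoStepObservability.
Variables (R : fieldType) (n m : nat) (C : 'M[R]_(m, n)).

Definition two_step_observable (M : 'M[R]_n) : Prop :=
  forall v : 'cV[R]_n, C *m v = 0 -> C *m (M *m v) = 0 -> v = 0.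

Lemma two_step_observable_row (M : 'M[R]_n) (w : 'rV[R]_n) :
  two_step_observable M -> w *m C^T = 0 -> w *m (C *m M)^T = 0 -> w = 0.
Proof.
move=> obs Cw0 CMw0; rewrite -[w]trmxK (obs w^T) ?trmx0 //.
  by rewrite -[C]trmxK -trmx_mul Cw0 trmx0.
by rewrite mulmxA -[C *m M]trmxK -trmx_mul CMw0 trmx0.
Qed.

Lemma stablemx_sub_kermx0 (M W : 'M[R]_n) :
  two_step_observable M -> stablemx W M^T -> (W <= kermx C^T)%MS -> W = 0.
Proof.
move=> obs W_stable W_ker; apply/row_matrixP => i; rewrite row0.
have row_ker : (row i W <= kermx C^T)%MS := submx_trans (row_sub i W) W_ker.
apply: (two_step_observable_row obs); first exact/sub_kermxP.
rewrite trmx_mul mulmxA; apply/sub_kermxP; apply: submx_trans W_ker.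
exact: submx_trans (submxMr _ (row_sub i W)) W_stable.
Qed.

End TwoStepObservability.

Section Plant.
Variables (R : realFieldType) (n m k : nat).
Variables (A : 'M[R]_n) (B : 'M[R]_(n, k)) (C : 'M[R]_(m, n)).

Lemma two_step_observable_B_sub_ker (F : 'M[R]_(k, n)) :
  (forall u : 'cV[R]_k, C *m (B *m u) = 0) ->
  (forall v : 'cV[R]_n, v != 0 -> C *m v = 0 -> C *m A *m v != 0) ->
  two_step_observable C (A + B *m F).
Proof.
move=> CB0 CA_inj v Cv0 CMv0; apply: contra_eq CMv0 => v_neq0.
by rewrite mulmxDl mulmxDr -(mulmxA B) CB0 addr0 mulmxA CA_inj.
Qed.

Lemma two_step_observable_ker_sub_B (p : nat) (Z : 'M[R]_(p, n))
    (F : 'M[R]_(k, n)) :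
  (forall v : 'cV[R]_n, C *m v = 0 -> exists u : 'cV[R]_k, v = B *m u) ->
  Z *m B = 0 ->
  (forall v : 'cV[R]_n, v != 0 -> C *m v = 0 -> Z *m A *m v != 0) ->
  two_step_observable C (A + B *m F).
Proof.
move=> kerC_B ZB0 ZA_inj v Cv0 CMv0; apply/eqP; apply: contraT => v_neq0.
have [u Mv] := kerC_B _ CMv0.
have : Z *m ((A + B *m F) *m v) = 0 by rewrite Mv mulmxA ZB0 mul0mx.
rewrite mulmxDl mulmxDr !mulmxA ZB0 !mul0mx addr0 => ZAv0.
by have := ZA_inj v v_neq0 Cv0; rewrite ZAv0 eqxx.
Qed.

Lemma dim_Vstar0 :
  (forall F : 'M[R]_(k, n), two_step_observable C (A + B *m F)) ->
  dim_Vstar A B C 0.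
Proof.
move=> obs; exists 0; split; last exact: mxrank0.
split; [by exists 0; rewrite mul0mx sub0mx | exact: sub0mx |].
move=> W [F W_stable] W_ker.
by rewrite (stablemx_sub_kermx0 (obs F) W_stable W_ker) sub0mx.
Qed.

Lemma kermx_Omega_sub (F : 'M[R]_(k, n)) (i : 'I_n) :
  (kermx (Omega A B C F)^T <= kermx (C *m (A + B *m F) ^+ i)^T)%MS.
Proof.
apply/sub_kermxP; have := mulmx_ker (Omega A B C F)^T.
rewrite /Omega tr_mxcol mul_mxrow => /(congr1 (fun X => submxrow X i)).
by rewrite mxrowK submxrow0.
Qed.

Lemma kermx_Omega_sub_ker (F : 'M[R]_(k, n)) : (0 < n)%N ->
  (kermx (Omega A B C F)^T <= kermx C^T)%MS.
Proof.
by move=> n_gt0; have := kermx_Omega_sub F (Ordinal n_gt0); rewrite expr0 mulmx1.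
Qed.

Lemma kermx_Omega_sub_step (F : 'M[R]_(k, n)) : (0 < n)%N ->
  (kermx (Omega A B C F)^T <= kermx (C *m (A + B *m F))^T)%MS.
Proof.
move=> n_gt0; case: (ltnP 1 n) => [n_gt1 | n_le1].
  by rewrite -[A + _]expr1 (kermx_Omega_sub F (Ordinal n_gt1)).
(* Omega C F then has the single block C, but A + B F is a scalar. *)
have [c ->] := mx_le1_scalar (A + B *m F) n_le1.
apply/sub_kermxP; rewrite mul_mx_scalar linearZ /= -scalemxAr.
by move/sub_kermxP: (kermx_Omega_sub_ker F n_gt0) ->; rewrite scaler0.
Qed.

Lemma dimKerOmega_eq0 (F : 'M[R]_(k, n)) :
  two_step_observable C (A + B *m F) -> dimKerOmega A B C F = 0%N.
Proof.
move=> obs; apply/eqP; rewrite mxrank_eq0; apply/eqP/row_matrixP => j.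
have n_gt0 : (0 < n)%N := leq_ltn_trans (leq0n j) (ltn_ord j).
rewrite row0; apply: (two_step_observable_row obs); apply/sub_kermxP.
  exact: submx_trans (row_sub _ _) (kermx_Omega_sub_ker F n_gt0).
exact: submx_trans (row_sub _ _) (kermx_Omega_sub_step F n_gt0).
Qed.

Lemma BR2_a_ker0 (F : 'M[R]_(k, n)) :
  (forall F' : 'M[R]_(k, n), dimKerOmega A B C F' = 0%N) ->
  dim_Vstar A B C 0 -> BR2_a A B F C.
Proof. by move=> ker0 Vstar0; split=> [C'|]; [rewrite ker0 | exists 0%N]. Qed.

Section Game.
Variables (F0 : 'M[R]_(k, n)) (Cs : nat -> 'M[R]_(m, n)).
Variables (Fs : nat -> 'M[R]_(k, n)) (Phi : nat -> nat) (l : nat).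
Hypotheses (play : game A B F0 Cs Fs Phi) (l_odd : odd l).

Lemma game_attacker_keeps :
  (forall F : 'M[R]_(k, n), BR2_a A B F C) -> Cs l = C ->
  forall i, (l <= i)%N -> Cs i = C.
Proof.
move=> C_best Cl; have [_ epoch] := play; elim/ltn_ind=> i IH l_le_i.
have [<- // | l_neq_i] := eqVneq l i.
have [odd_step even_step] := epoch i ltac:(lia).
case i_odd: (odd i).
- have [_ keep _ _] := odd_step i_odd.
  have l2_le_i : (l.+2 <= i)%N.
    suff : l.+1 != i by lia.
    by apply: contraTneq i_odd => <-; rewrite /= l_odd.
  have Ci2 : Cs (i - 2)%N = C by apply: IH; lia.
  by rewrite keep; [exact: Ci2 | lia | rewrite Ci2; apply: C_best].
- by have [_ _ -> _] := even_step (negbT i_odd); apply: IH; lia.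
Qed.

Lemma game_value0 :
  (forall F : 'M[R]_(k, n), dimKerOmega A B C F = 0%N) ->
  (forall i, (l <= i)%N -> Cs i = C) ->
  forall i, (l <= i)%N -> Phi i = 0%N.
Proof.
move=> ker0 Cs_C i l_le_i; have [_ epoch] := play.
have l_gt0 : (0 < l)%N by case: (l) l_odd.
have [odd_step even_step] := epoch i (leq_trans l_gt0 l_le_i).
case i_odd: (odd i).
- have [_ _ _ [_ min_le]] := odd_step i_odd.
  by apply/eqP; rewrite -leqn0 -(ker0 (Fs i.-1)); apply: min_le.
- have [_ _ _ [[F <-] _]] := even_step (negbT i_odd).
  have l_lt_i : (l < i)%N.
    suff : l != i by lia.
    by apply: contraTneq (negbT i_odd) => <-; rewrite l_odd.
  by rewrite Cs_C ?ker0 //; lia.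
Qed.

End Game.

End Plant.

Theorem theorem2 (R : realFieldType) (n m k : nat)
    (A : 'M[R]_n) (B : 'M[R]_(n, k)) (C : 'M[R]_(m, n)) :
  ( (* case (1) *)
    [/\ (m + k <= n)%N,
        (forall u : 'cV[R]_k, C *m (B *m u) = 0) &
        (forall v : 'cV[R]_n, v != 0 -> C *m v = 0 -> C *m A *m v != 0)]
  \/
    (* case (2) *)
    [/\ (n < m + k)%N,
        (forall v : 'cV[R]_n, C *m v = 0 -> exists u : 'cV[R]_k, v = B *m u) &
        (exists (p : nat) (Z : 'M[R]_(p, n)), Z *m B = 0 /\
           (forall v : 'cV[R]_n, v != 0 -> C *m v = 0 -> Z *m A *m v != 0))]) ->
  dim_Vstar A B C 0 /\
  (forall (F0 : 'M[R]_(k, n)) (Cs : nat -> 'M[R]_(m, n))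
          (Fs : nat -> 'M[R]_(k, n)) (Phi : nat -> nat) (l : nat),
     game A B F0 Cs Fs Phi -> odd l -> Cs l = C ->
     exists gamma : nat, forall i : nat, (l <= i)%N -> Phi i = gamma).
Proof.
move=> hyp; have obs F : two_step_observable C (A + B *m F).
  case: hyp => [[_ CB0 CA_inj] | [_ kerC_B [p [Z [ZB0 ZA_inj]]]]].
  - exact: two_step_observable_B_sub_ker.
  - exact: two_step_observable_ker_sub_B ZB0 ZA_inj.
have Vstar0 := dim_Vstar0 obs.
have ker0 F := dimKerOmega_eq0 (obs F).
split=> [// | F0 Cs Fs Phi l play l_odd Cl]; exists 0%N.
apply: (game_value0 play l_odd ker0).
apply: game_attacker_keeps play l_odd _ Cl => F.
exact: BR2_a_ker0 ker0 Vstar0.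
Qed.
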